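(* The code $\mathcal C_3(\mathbb D_d)$ is the $\mathbb F_3$-linear span of the vectors (functions of $t\in\mathbb F_{3^{2m}}$) \[ \mathrm{Tr}_{2m}(bt)\mathrm{Tr}_{2m}(b't),\quad \mathrm{Tr}_{2m}(bt),\quad \mathrm{Tr}_{2m}(at^{3^m+1})\mathrm{Tr}_{2m}(bt),\quad \mathrm{Tr}_{2m}(at^{3^m+1})\mathrm{Tr}_{2m}(a't^{3^m+1}),\quad \mathrm{Tr}_{2m}(at^{3^m+1}),\quad \mathbf 1, \] where $a,a'$ range over $\mathbb F_{3^m}^*$ and $b,b'$ range over $\mathbb F_{3^{2m}}$, and $\mathbf 1$ is the all-one vector.
   Context: Let $m\ge 2$ be an integer. For $s\in\{m,2m\}$ let $\mathrm{Tr}_s:\mathbb F_{3^s}\to\mathbb F_3$ denote the absolute trace. Vectors in $\mathbb F_3^{3^{2m}}$ are indexed by $\mathbb F_{3^{2m}}$, and a function $f:\mathbb F_{3^{2m}}\to\mathbb F_3$ is identified with $(f(t))_{t\in\mathbb F_{3^{2m}}}$; products are pointwise. Let $\mathcal C(2m,3)=\{(\mathrm{Tr}_{2m}(at^{3^m+1}+bt)+h)_{t\in\mathbb F_{3^{2m}}}: a\in\mathbb F_{3^m}, b\in\mathbb F_{3^{2m}}, h\in\mathbb F_3\}$, let $d$ be its minimum nonzero Hamming weight, let $\mathbb D_d$ be the incidence structure on $\mathbb F_{3^{2m}}$ whose blocks are the supports of the weight-$d$ codewords, and let $\mathcal C_3(\mathbb D_d)$ be the $\mathbb F_3$-span of the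 incidence vectors of the blocks (entry $1$ on the block, $0$ elsewhere). *)

From HB Require Import structures.
From mathcomp Require Import all_boot all_order all_algebra all_field.
Set Implicit Arguments. Unset Strict Implicit. Unset Printing Implicit Defensive.
Import GRing.Theory.
Local Open Scope ring_scope.

Section Defs.
Variable F : finFieldType.   (* intended: F = F_{3^{2m}} *)
Variable m : nat.

Definition vec := {ffun F -> 'F_3}.

Definition insub_m (a : F) : bool := a ^+ (3 ^ m) == a.

Definition TrF (x : F) : F := \sum_(i < 2 * m) x ^+ (3 ^ i).

(* the trace, read as an element of F_3 (identifying F_3 with the prime
   subfield of F via c |-> c%:R) *)
Definition Tr (x : F) : 'F_3 :=
  odflt 0 [pick c : 'F_3 | (nat_of_ord c)%:R == TrF x].

Definition wt (f : vec) : nat := #|[set t | f t != 0]|.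

Definition f3span (S : {set vec}) : {set vec} :=
  [set f | [exists lam : {ffun vec -> 'F_3},
     f == \sum_(g in S) [ffun t => lam g * g t]]].

Definition code : {set vec} :=
  [set f | [exists a : F, exists b : F, exists h : 'F_3,
     insub_m a && (f == [ffun t => Tr (a * t ^+ (3 ^ m + 1) + b * t) + h])]].

Definition minwords : {set vec} :=
  [set c in code | (c != 0) && [forall c' in code, (c' != 0) ==> (wt c <= wt c')%N]].

Definition blocks : {set {set F}} := [set [set t | c t != 0] | c : vec in minwords].

Definition incid (B : {set F}) : vec := [ffun t => (t \in B)%:R : 'F_3].

Definition design_code : {set vec} := f3span [set incid B | B in blocks].

Definition gens : {set vec} :=
  [set f | [exists b : F, exists b' : F,
               f == [ffun t => Tr (b * t) * Tr (b' * t)]]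
        || [exists b : F, f == [ffun t => Tr (b * t)]]
        || [exists a : F, exists b : F,
               [&& insub_m a, a != 0 &
                f == [ffun t => Tr (a * t ^+ (3 ^ m + 1)) * Tr (b * t)]]]
        || [exists a : F, exists a' : F,
               [&& insub_m a, a != 0, insub_m a', a' != 0 &
                f == [ffun t => Tr (a * t ^+ (3 ^ m + 1)) * Tr (a' * t ^+ (3 ^ m + 1))]]]
        || [exists a : F,
               [&& insub_m a, a != 0 & f == [ffun t => Tr (a * t ^+ (3 ^ m + 1))]]]
        || (f == [ffun => 1])].

End Defs.

From HB Require Import structures.
From mathcomp Require Import all_boot all_order all_algebra all_field.
From mathcomp Require Import ring zify.
Import GRing.Theory.
Local Open Scope ring_scope.
Set Implicit Arguments.
Unset Strict Implicit.

(* Write q = 3^m, so that F = F_(q^2) and F_q = {a | a^q = a}; for t in F put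
   Q_a(t) = Tr(a t^(q+1)) and L_b(t) = Tr(b t).  Since x^2 = [x != 0] in F_3,
   the incidence vector of the support of a codeword w is the square of w.
   - Every codeword is Q_a + L_b + h, so the square of a codeword expands into
     the generators; hence C_3(D_d) is contained in their span.
   - For a in F_q the expansion  Q_a(t+c) = Q_a(t) + 2 L_(a c^q)(t) + Q_a(c)
     ("completing the square") shows that, for a != 0, every Q_a + L_b + h is
     a translate of some Q_a + h'.
   - Counting the roots of additive polynomials bounds the fibres of Q_a
     (a in F_q, a != 0) over each u in F_3 by a number Qcount u; these bounds
     add up to q^2, so they are exact.  It follows that every nonzero codeword
     has at most Qcount 1 zeros while the translates Q_a(t+c) + h, h != 0,
     have exactly Qcount 1 zeros: they are minimum-weight codewords.
   - Explicit F_3-combinations of the squares of these minimum-weight words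
     yield 1, the translates Q_a(t+c), then L_b, Q_a^2, L_b^2 and, by
     polarisation, all the generators; hence their span lies in C_3(D_d). *)

Section F3Span.
Variable F : finFieldType.
Implicit Types (S T : {set vec F}) (f g : vec F).

Lemma f3spanP S f :
  reflect (exists lam : {ffun vec F -> 'F_3}, forall t, f t = \sum_(g in S) lam g * g t)
          (f \in f3span S).
Proof.
rewrite inE; apply: (iffP existsP) => [[lam /eqP ->] | [lam Ef]]; exists lam.
  by move=> t; rewrite sum_ffun ffunE; apply: eq_bigr => g _; rewrite ffunE.
apply/eqP/ffunP => t; rewrite Ef sum_ffun ffunE.
by apply: eq_bigr => g _; rewrite ffunE.
Qed.

Lemma mem_f3span S g : g \in S -> g \in f3span S.
Proof.
move=> gS; apply/f3spanP; exists [ffun h => (h == g)%:R] => t.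
rewrite (bigD1 g) //= ffunE eqxx mul1r big1 ?addr0 // => h /andP [_ /negPf hg].
by rewrite ffunE hg mul0r.
Qed.

Lemma f3span_lin S k f g : f \in f3span S -> g \in f3span S ->
  [ffun t => k * f t + g t] \in f3span S.
Proof.
move=> /f3spanP [lf Ef] /f3spanP [lg Eg]; apply/f3spanP.
exists [ffun h => k * lf h + lg h] => t; rewrite ffunE Ef Eg mulr_sumr -big_split.
by apply: eq_bigr => h _; rewrite ffunE mulrDl mulrA.
Qed.

Lemma f3span_comb S (cs : seq ('F_3 * vec F)) f :
  all (fun p => p.2 \in f3span S) cs ->
  (forall t, f t = \sum_(p <- cs) p.1 * p.2 t) -> f \in f3span S.
Proof.
elim: cs f => [|[k g] cs IH] f /= => [_ | /andP [gS csS]] Ef.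
  apply/f3spanP; exists [ffun=> 0] => t.
  by rewrite Ef big_nil big1 // => g _; rewrite ffunE mul0r.
have -> : f = [ffun t => k * g t + [ffun s => \sum_(p <- cs) p.1 * p.2 s] t].
  by apply/ffunP => t; rewrite !ffunE Ef big_cons.
by apply: f3span_lin gS (IH _ csS _) => t; rewrite ffunE.
Qed.

Lemma f3span_zero S f : (forall t, f t = 0) -> f \in f3span S.
Proof. by move=> f0; apply: (f3span_comb (cs := [::])) => // t; rewrite f0 big_nil. Qed.

Lemma f3span_ext S f g : f \in f3span S -> (forall t, f t = g t) -> g \in f3span S.
Proof. by move=> fS fg; have -> : g = f by apply/ffunP => t; rewrite fg. Qed.

Lemma f3span_eq S T :
  {subset S <= f3span T} -> {subset T <= f3span S} -> f3span S = f3span T.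
Proof.
have sub S' T' : {subset S' <= f3span T'} -> {subset f3span S' <= f3span T'}.
  move=> ST f /f3spanP [lam Ef].
  apply: (f3span_comb (cs := [seq (lam g, g) | g <- enum S'])).
    by apply/allP => _ /mapP [g gS ->]; apply: ST; rewrite mem_enum in gS.
  by move=> t; rewrite Ef big_map big_enum.
by move=> ST TS; apply/setP => f; apply/idP/idP; apply: sub.
Qed.

End F3Span.

Lemma F3_cases (x : 'F_3) : [\/ x = 0, x = 1 | x = -1].
Proof.
by case: x => [[|[|[|n]]] lt] //; [apply: Or31 | apply: Or32 | apply: Or33];
  apply: val_inj.
Qed.

Lemma F3_sqr (x : 'F_3) : x ^+ 2 = (x != 0)%:R.
Proof. by case: (F3_cases x) => ->; apply/eqP. Qed.

Lemma incid_support (F : finFieldType) (w : vec F) :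
  incid [set t | w t != 0] = [ffun t => w t ^+ 2].
Proof. by apply/ffunP => t; rewrite !ffunE inE F3_sqr. Qed.

(* Identities between polynomial expressions in finitely many F_3-valued
   quantities (traces and F_3 variables) are decided by enumerating their
   values: the traces are generalized, then each F_3 variable is replaced in
   turn by 0, 1 and -1. *)
Ltac f3_brute :=
  repeat match goal with x := _ |- _ => clear x || clearbody x end;
  repeat match goal with |- context [@Tr ?F ?m ?e] =>
    let x := fresh "x" in set x := @Tr F m e; clearbody x end;
  repeat match goal with x : ?T |- _ =>
    unify T ('F_3 : Type); case: (F3_cases x) => ->; clear dependent x end;
  first [by [] | apply/eqP; by []].

Section Counting.
Variable F : finFieldType.

Lemma card_roots_lt (P : {poly F}) : P != 0 -> (#|[set x | root P x]| < size P)%N.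
Proof.
move=> P0; rewrite cardE; apply: max_poly_roots => //; last exact: enum_uniq.
by apply/allP => x; rewrite mem_enum inE.
Qed.

Lemma card_pow_fibre n (y : F) : (0 < n)%N -> (#|[set t | t ^+ n == y]| <= n)%N.
Proof.
move=> n0; have P0 : 'X^n - y%:P != 0 by rewrite -size_poly_eq0 size_XnsubC.
have := card_roots_lt P0; rewrite size_XnsubC // ltnS.
have -> // : [set t | root ('X^n - y%:P) t] = [set t | t ^+ n == y].
by apply/setP => t; rewrite !inE rootE !hornerE subr_eq0.
Qed.

(* An additive polynomial sum_(i <= n) c_i X^(p^i) with c_n != 0 has degree
   p^n, so it takes each value at most p^n times. *)
Lemma card_additive_fibre p n (c : nat -> F) (k : F) : (1 < p)%N -> c n != 0 ->
  (#|[set x | (\sum_(i < n.+1) c i * x ^+ (p ^ i) == k)%R]| <= p ^ n)%N.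
Proof.
move=> p1 cn.
pose P : {poly F} := \sum_(i < n.+1) c i *: 'X^(p ^ i) - k%:P.
have coefP j : (0 < j)%N -> P`_j = \sum_(i < n.+1) c i * (j == p ^ i)%N%:R.
  move=> j0; rewrite coefB coefC (gtn_eqF j0) subr0 coef_sum.
  by apply: eq_bigr => i _; rewrite coefZ coefXn.
have lead : P`_(p ^ n)%N = c n.
  rewrite coefP ?expn_gt0 ?(ltnW p1) // (bigD1 ord_max) //= eqxx mulr1.
  rewrite big1 ?addr0 // => i /negbTE ni; rewrite eqn_exp2l // eq_sym.
  by rewrite -val_eqE /= in ni; rewrite ni mulr0.
have high j : (p ^ n < j)%N -> P`_j = 0.
  move=> hj; rewrite coefP ?(leq_ltn_trans _ hj) // big1 // => i _.
  rewrite gtn_eqF ?mulr0 // (leq_ltn_trans _ hj) // leq_pexp2l ?(ltnW p1) //.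
  by rewrite -ltnS.
have P0 : P != 0 by apply: contra_neq cn => P0; rewrite -lead P0 coef0.
have sizeP : (size P <= (p ^ n).+1)%N by apply/leq_sizeP => j; apply: high.
have rootP (x : F) : root P x = (\sum_(i < n.+1) c i * x ^+ (p ^ i) == k).
  rewrite rootE !hornerE horner_sum subr_eq0.
  by congr (_ == k); apply: eq_bigr => i _; rewrite hornerZ hornerXn.
have -> : [set x | (\sum_(i < n.+1) c i * x ^+ (p ^ i) == k)%R] = [set x | root P x].
  by apply/setP => x; rewrite !inE rootP.
by rewrite -ltnS; apply: leq_trans (card_roots_lt P0) sizeP.
Qed.

Lemma card_translate (A : {set F}) c : #|[set t | t + c \in A]| = #|A|.
Proof.
rewrite -[RHS](card_preimset _ (addIr c)).
by apply: eq_card => t; rewrite !inE.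
Qed.

Lemma sum_card_fibres (g : F -> 'F_3) :
  (\sum_(u : 'F_3) #|[set t | g t == u]|)%N = #|F|.
Proof.
rewrite -sum1_card (partition_big g xpredT) //.
by apply: eq_bigr => u _; rewrite -sum1_card; apply: eq_bigl => t; rewrite inE.
Qed.

Definition zeros (f : vec F) : {set F} := [set t | f t == 0].

Lemma wtE (f : vec F) : wt f = (#|F| - #|zeros f|)%N.
Proof. by rewrite -(cardsC (zeros f)) addKn /wt; apply: eq_card => t; rewrite !inE. Qed.

End Counting.

Lemma leq_sum_eq (I : finType) (E1 E2 : I -> nat) :
  (forall i, E1 i <= E2 i)%N -> (\sum_i E1 i = \sum_i E2 i)%N -> forall i, E1 i = E2 i.
Proof.
move=> le12 eq12 i; apply/eqP.
have [_] := leqif_sum (fun i (_ : true) => leqif_eq (le12 i)).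
by rewrite eq12 eqxx => /esym /forallP /(_ i).
Qed.

Section Code.
Variables (F : finFieldType) (m : nat).
Hypothesis char3 : 3%N \in [pchar F].
Hypothesis cardF : #|F| = (3 ^ (2 * m))%N.
Local Notation q := (3 ^ m)%N.
Implicit Types (a b c t x y : F) (u v : 'F_3).

Lemma frobD k x y : (x + y) ^+ (3 ^ k) = x ^+ (3 ^ k) + y ^+ (3 ^ k).
Proof. by apply: exprDn_pchar; rewrite pnatX pnatE ?char3. Qed.

Lemma expqK x : (x ^+ q) ^+ q = x.
Proof. by rewrite -exprM -expnD addnn -mul2n -cardF expf_card. Qed.

(* q is odd, so x |-> x^q commutes with negation. *)
Lemma expqN x : (- x) ^+ q = - x ^+ q.
Proof. by apply/eqP; rewrite -addr_eq0 -frobD addNr expr0n expn_eq0. Qed.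

Definition io u : F := (val u)%:R.

Lemma ioD u v : io (u + v) = io u + io v.
Proof. by rewrite /io -natrD -[in RHS](GRing.natr_mod_pchar char3). Qed.

Lemma io_inj : injective io.
Proof.
have io_eq0 w : io w = 0 -> w = 0.
  move/eqP; rewrite -(dvdn_pcharf char3) => dvd3; apply/val_inj/eqP => /=.
  by rewrite eqn0Ngt; apply/negP => /dvdn_leq/(_ dvd3); rewrite leqNgt ltn_ord.
move=> u v E; apply/eqP; rewrite -subr_eq0; apply/eqP/io_eq0.
by apply: (addIr (io v)); rewrite -ioD subrK E add0r.
Qed.

Lemma TrFD x y : TrF m (x + y) = TrF m x + TrF m y.
Proof. by rewrite /TrF -big_split; apply: eq_bigr => i _; apply: frobD. Qed.

(* The trace is Frobenius-invariant: the conjugates are permuted cyclically. *)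
Lemma TrF_frob x : TrF m (x ^+ 3) = TrF m x.
Proof.
rewrite /TrF; case: (2 * m)%N cardF => [|n] cardFn; first by rewrite !big_ord0.
rewrite big_ord_recr big_ord_recl /= addrC -exprM -expnS -cardFn expf_card.
by congr (_ + _); apply: eq_bigr => i _; rewrite -exprM -expnS.
Qed.

Lemma TrF_frobk k x : TrF m (x ^+ (3 ^ k)) = TrF m x.
Proof. by elim: k => [|k IH]; rewrite ?expr1 // expnSr exprM TrF_frob. Qed.

(* Hence TrF x is a root of X^3 - X, i.e. lies in the prime field. *)
Lemma TrF_prime x : exists u, io u = TrF m x.
Proof.
set y := TrF m x.
have y3 : y ^+ 3 = y.
  rewrite -[LHS](pFrobenius_autE char3) rmorph_sum /= -[RHS](TrF_frob x) /TrF.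
  by apply: eq_bigr => i _; rewrite pFrobenius_autE exprAC.
have : y * (y - 1) * (y + 1) = 0 by rewrite -[RHS](subrr y) -{4}y3; ring.
have io2 : io (-1) = -1.
  by rewrite /io; apply/eqP; rewrite -subr_eq0 opprK -(natrD _ 2 1) pcharf0.
move/eqP; rewrite !mulf_eq0 subr_eq0 addr_eq0 => /orP [/orP [] | ] /eqP yE.
- by exists 0; rewrite yE.
- by exists 1; rewrite yE.
- by exists (-1); rewrite yE io2.
Qed.

Lemma ioTr x : io (Tr m x) = TrF m x.
Proof.
rewrite /Tr; case: pickP => [u /eqP // | noval].
by have [u uE] := TrF_prime x; move: (noval u); rewrite /io in uE *; rewrite uE eqxx.
Qed.

Lemma TrE x u : (Tr m x == u) = (TrF m x == io u).
Proof. by rewrite -ioTr (inj_eq io_inj). Qed.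

Lemma TrD x y : Tr m (x + y) = Tr m x + Tr m y.
Proof. by apply: io_inj; rewrite ioD !ioTr TrFD. Qed.

Lemma Tr0 : Tr m (0 : F) = 0.
Proof. by apply: (addIr (Tr m (0 : F))); rewrite -TrD addr0 add0r. Qed.

Lemma TrN x : Tr m (- x) = - Tr m x.
Proof. by apply/eqP; rewrite -addr_eq0 -TrD addNr Tr0. Qed.

Lemma Tr_frobk k x : Tr m (x ^+ (3 ^ k)) = Tr m x.
Proof. by apply: io_inj; rewrite !ioTr TrF_frobk. Qed.

(* Completing the square: for a in F_q the cross terms (a c^q t)^q and
   a c^q t of a (t + c)^(q+1) have the same trace. *)
Lemma TrQ_shift a c t : a ^+ q = a ->
  Tr m (a * (t + c) ^+ (q + 1)) =
  Tr m (a * t ^+ (q + 1)) + Tr m (a * c ^+ q * t) *+ 2 + Tr m (a * c ^+ (q + 1)).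
Proof.
move=> aq; have -> : a * (t + c) ^+ (q + 1) = a * t ^+ (q + 1)
    + (a * c ^+ q * t) ^+ q + a * c ^+ q * t + a * c ^+ (q + 1).
  by rewrite !exprMn aq expqK addn1 !exprSr frobD; ring.
by rewrite !TrD Tr_frobk mulr2n addrA.
Qed.

Lemma TrQ_shiftN a c t : a ^+ q = a ->
  Tr m (a * (t - c) ^+ (q + 1)) =
  Tr m (a * t ^+ (q + 1)) - Tr m (a * c ^+ q * t) *+ 2 + Tr m (a * c ^+ (q + 1)).
Proof.
move=> aq; have even_pow : (- c) ^+ (q + 1) = c ^+ (q + 1).
  by rewrite !exprD expqN !expr1 mulrNN.
by rewrite TrQ_shift // even_pow expqN mulrN mulNr TrN mulNrn.
Qed.

(* From here on m >= 1, so that the traces of F and of F_q are nonempty sums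
   of Frobenius conjugates. *)
Hypothesis m_gt0 : (0 < m)%N.

(* On F_q the trace of F is twice the trace of F_q over F_3. *)
Lemma TrF_Fq a y : a ^+ q = a -> y ^+ q = y ->
  TrF m (a * y) = \sum_(i < m) (2%:R * a ^+ (3 ^ i)) * y ^+ (3 ^ i).
Proof.
move=> aq yq; rewrite /TrF mul2n -addnn big_split_ord /= -big_split /=.
apply: eq_bigr => i _.
by rewrite expnD exprM [(a * y) ^+ q]exprMn aq yq exprMn; ring.
Qed.

Definition Lfibre b u : {set F} := [set t | Tr m (b * t) == u].
Definition Lfibre_Fq a u : {set F} := [set y | (y ^+ q == y) && (Tr m (a * y) == u)].
Definition Qfibre a u : {set F} := [set t | Tr m (a * t ^+ (q + 1)) == u].

Lemma card_Lfibre_Fq a u : a ^+ q = a -> a != 0 -> (#|Lfibre_Fq a u| <= 3 ^ m.-1)%N.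
Proof.
move=> aq a0; have two0 : (2%:R : F) != 0 by rewrite -(dvdn_pcharf char3).
apply: leq_trans (card_additive_fibre (p := 3) (c := fun i => 2%:R * a ^+ (3 ^ i))
  (io u) _ _) => //; last by rewrite mulf_neq0 ?expf_neq0.
apply: subset_leq_card; apply/subsetP => y.
by rewrite !inE (prednK m_gt0) => /andP [/eqP yq]; rewrite TrE TrF_Fq.
Qed.

Lemma card_Lfibre b u : b != 0 -> (#|Lfibre b u| <= 3 ^ (2 * m).-1)%N.
Proof.
move=> b0; have mm_gt0 : (0 < 2 * m)%N by rewrite muln_gt0 m_gt0.
apply: leq_trans (card_additive_fibre (p := 3) (c := fun i => b ^+ (3 ^ i))
  (io u) _ _) => //; last exact: expf_neq0.
apply: subset_leq_card; apply/subsetP => t; rewrite !inE (prednK mm_gt0) TrE /TrF.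
by under eq_bigr do rewrite exprMn.
Qed.

Lemma norm_Fq t : (t ^+ (q + 1)) ^+ q = t ^+ (q + 1).
Proof. by rewrite -exprM mulnDl mul1n exprD exprM expqK [RHS]exprD expr1 mulrC. Qed.

(* The size of the fibre of Q_a over u: the point 0 when u = 0, plus q + 1
   points over each y in F_q^* with Tr(a y) = u. *)
Definition Qcount (u : 'F_3) : nat :=
  ((u == 0)%R + (q + 1) * (3 ^ m.-1 - (u == 0)%R))%N.
Arguments Qcount u%_R.

(* Since each fibre of the norm has at most q + 1 points, the nonzero part
   of Qfibre a u is at most q + 1 times the nonzero part of Lfibre_Fq a u. *)
Lemma card_Qfibre_nz a u :
  (#|Qfibre a u :\ 0%R| <= (q + 1) * #|Lfibre_Fq a u :\ 0%R|)%N.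
Proof.
rewrite -sum1_card (partition_big (fun t => t ^+ (q + 1)) [in Lfibre_Fq a u :\ 0]) /=.
  2: by move=> t; rewrite !inE => /andP [t0 Qt]; rewrite expf_neq0 // norm_Fq eqxx Qt.
have q1 : (0 < q + 1)%N by rewrite addn1.
rewrite mulnC -sum_nat_const; apply: leq_sum => y _; rewrite sum1dep_card.
apply: leq_trans (card_pow_fibre y q1); apply: subset_leq_card.
by apply/subsetP => t; rewrite !inE => /andP [_ ->].
Qed.

Lemma card_Qfibre_le a u : a ^+ q = a -> a != 0 -> (#|Qfibre a u| <= Qcount u)%N.
Proof.
move=> aq a0.
have Q0 : (0 \in Qfibre a u) = (u == 0) by rewrite inE expr0n addn1 /= mulr0 Tr0 eq_sym.
have L0 : (0 \in Lfibre_Fq a u) = (u == 0).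
  by rewrite inE expr0n expn_eq0 /= mulr0 Tr0 eqxx eq_sym.
rewrite (cardsD1 0) Q0 /Qcount leq_add2l.
apply: leq_trans (card_Qfibre_nz a u) _; rewrite leq_mul2l; apply/orP; right.
have := card_Lfibre_Fq u aq a0; rewrite (cardsD1 0) L0.
by move: (u == 0) #|_ :\ 0| (3 ^ m.-1)%N => [] n r /=; lia.
Qed.

Lemma sum_Qcount : (\sum_(u : 'F_3) Qcount u)%N = #|F|.
Proof.
rewrite (bigD1 0) //= (eq_bigr (fun=> Qcount 1)) => [|u /negbTE u0]; last first.
  by rewrite /Qcount u0.
rewrite sum_nat_const cardC1 card_Fp // /Qcount /= cardF (mulnC 2 m) expnM.
have -> : q = (3 * 3 ^ m.-1)%N by rewrite -expnS prednK.
have : (0 < 3 ^ m.-1)%N by rewrite expn_gt0.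
by move: (3 ^ m.-1)%N => r r0; nia.
Qed.

(* The bounds are exact, since both fibre sizes and bounds add up to #|F|. *)
Lemma card_Qfibre a u : a ^+ q = a -> a != 0 -> #|Qfibre a u| = Qcount u.
Proof.
move=> aq a0; apply: (leq_sum_eq (E1 := fun v => #|Qfibre a v|)).
  by move=> v; apply: card_Qfibre_le.
by rewrite sum_card_fibres sum_Qcount.
Qed.

Definition codeword a b h : vec F := [ffun t => Tr m (a * t ^+ (q + 1) + b * t) + h].
Arguments codeword (a b h)%_R.

Lemma Qcount_le u : (Qcount u <= Qcount 1)%N.
Proof.
rewrite /Qcount; case: (u == 0) => //=; have : (0 < 3 ^ m.-1)%N by rewrite expn_gt0.
by move: (3 ^ m.-1)%N => r r0; nia.
Qed.

Lemma card_zeros_linear b h : b != 0 -> (#|zeros (codeword 0 b h)| <= Qcount 1)%N.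
Proof.
move=> b0; have -> : zeros (codeword 0 b h) = Lfibre b (- h).
  by apply/setP => t; rewrite !inE ffunE mul0r add0r addr_eq0.
apply: leq_trans (card_Lfibre (- h) b0) _.
have -> : ((2 * m).-1 = m + m.-1)%N by lia.
by rewrite /Qcount /= subn0 add0n expnD leq_mul2r leq_addr orbT.
Qed.

(* Completing the square, for a in F_q^* the codeword Q_a + L_b + h is a
   translate of Q_a + h', whose zero set is a fibre of Q_a. *)
Lemma card_zeros_quadratic a b h : a ^+ q = a -> a != 0 ->
  (#|zeros (codeword a b h)| <= Qcount 1)%N.
Proof.
move=> aq a0; pose c := (- b / a) ^+ q.
have acq : a * c ^+ q = - b by rewrite expqK mulrC divfK.
set k := Tr m (a * c ^+ (q + 1)) - h.
have -> : zeros (codeword a b h) = [set t | t + c \in Qfibre a k].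
  apply/setP => t; rewrite !inE ffunE TrQ_shift // acq !TrD mulNr TrN /k; f3_brute.
by rewrite card_translate card_Qfibre ?Qcount_le.
Qed.

Lemma card_zeros_codeword w : w \in code F m -> w != 0 -> (#|zeros w| <= Qcount 1)%N.
Proof.
rewrite inE => /existsP [a /existsP [b /existsP [h /andP [/eqP aq /eqP ->]]]].
rewrite -/(codeword a b h) => w0.
have [a0 | a0] := eqVneq a 0; last exact: card_zeros_quadratic.
have [b0 | b0] := eqVneq b 0; rewrite a0 in w0 *; last exact: card_zeros_linear.
have h0 : h != 0.
  apply: contra_neq w0 => h0; apply/ffunP => t.
  by rewrite /codeword b0 h0 !ffunE !mul0r !addr0 Tr0.
have -> : zeros (codeword 0 b h) = set0.
  by apply/setP => t; rewrite !inE ffunE b0 !mul0r addr0 Tr0 add0r (negbTE h0).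
by rewrite cards0.
Qed.

Lemma minword_translate a c h : a ^+ q = a -> a != 0 -> h != 0 ->
  [ffun t => Tr m (a * (t + c) ^+ (q + 1)) + h] \in minwords F m.
Proof.
move=> aq a0 h0; set w := [ffun t => _].
have w_code : w \in code F m.
  rewrite inE; apply/existsP; exists a; apply/existsP; exists ((a * c ^+ q) *+ 2).
  apply/existsP; exists (Tr m (a * c ^+ (q + 1)) + h).
  rewrite /insub_m aq eqxx; apply/eqP/ffunP => t.
  by rewrite !ffunE TrQ_shift // TrD mulr2n mulrDl TrD; f3_brute.
have w_zeros : #|zeros w| = Qcount 1.
  have -> : zeros w = [set t | t + c \in Qfibre a (- h)].
    by apply/setP => t; rewrite !inE ffunE addr_eq0.
  by rewrite card_translate card_Qfibre // /Qcount oppr_eq0 (negbTE h0).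
rewrite inE w_code /=; apply/andP; split.
  apply: contra_neq h0 => /ffunP /(_ (- c)).
  by rewrite !ffunE addNr expr0n addn1 /= mulr0 Tr0 add0r.
apply/forall_inP => w' w'_code; apply/implyP => w'0.
by rewrite !wtE leq_sub2l // w_zeros card_zeros_codeword.
Qed.

Local Notation G := (f3span (gens F m)).

Lemma gens_LL b b' : [ffun t => Tr m (b * t) * Tr m (b' * t)] \in G.
Proof.
apply: mem_f3span; rewrite inE; do 5! (apply/orP; left).
by apply/existsP; exists b; apply/existsP; exists b'.
Qed.

Lemma gens_L b : [ffun t => Tr m (b * t)] \in G.
Proof.
apply: mem_f3span; rewrite inE; do 4! (apply/orP; left); apply/orP; right.
by apply/existsP; exists b.
Qed.

(* The generators involving Q_a are also in the span for a = 0, since they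
   then vanish. *)
Lemma gens_QL a b : a ^+ q = a ->
  [ffun t => Tr m (a * t ^+ (q + 1)) * Tr m (b * t)] \in G.
Proof.
move=> aq; have [-> | a0] := eqVneq a 0.
  by apply: f3span_zero => t; rewrite ffunE mul0r Tr0 mul0r.
apply: mem_f3span; rewrite inE; do 3! (apply/orP; left); apply/orP; right.
by apply/existsP; exists a; apply/existsP; exists b; rewrite /insub_m aq !eqxx a0.
Qed.

Lemma gens_QQ a a' : a ^+ q = a -> a' ^+ q = a' ->
  [ffun t => Tr m (a * t ^+ (q + 1)) * Tr m (a' * t ^+ (q + 1))] \in G.
Proof.
move=> aq a'q; have [-> | a0] := eqVneq a 0.
  by apply: f3span_zero => t; rewrite ffunE mul0r Tr0 mul0r.
have [-> | a'0] := eqVneq a' 0.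
  by apply: f3span_zero => t; rewrite ffunE mul0r Tr0 mulr0.
apply: mem_f3span; rewrite inE; do 2! (apply/orP; left); apply/orP; right.
by apply/existsP; exists a; apply/existsP; exists a'; rewrite /insub_m aq a'q !eqxx a0 a'0.
Qed.

Lemma gens_Q a : a ^+ q = a -> [ffun t => Tr m (a * t ^+ (q + 1))] \in G.
Proof.
move=> aq; have [-> | a0] := eqVneq a 0.
  by apply: f3span_zero => t; rewrite ffunE mul0r Tr0.
apply: mem_f3span; rewrite inE; apply/orP; left; apply/orP; right.
by apply/existsP; exists a; rewrite /insub_m aq !eqxx a0.
Qed.

Lemma gens_1 : [ffun=> 1] \in G.
Proof. by apply: mem_f3span; rewrite inE; apply/orP; right. Qed.

(* First inclusion: the incidence vector of a block is the square of a
   codeword, and (Q_a + L_b + h)^2 = Q_a^2 + L_b^2 + h^2 - Q_a L_b - h Q_a - h L_b. *)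
Lemma blocks_in_gens : {subset [set incid B | B in blocks F m] <= G}.
Proof.
move=> f /imsetP [B /imsetP [w w_min ->] ->]; rewrite incid_support.
move: w_min; rewrite inE => /andP [+ _].
rewrite inE => /existsP [a /existsP [b /existsP [h /andP [/eqP aq /eqP ->]]]].
apply: (f3span_comb (cs := [::
    (1, [ffun t => Tr m (a * t ^+ (q + 1)) * Tr m (a * t ^+ (q + 1))]);
    (1, [ffun t => Tr m (b * t) * Tr m (b * t)]); (h ^+ 2, [ffun=> 1]);
    (-1, [ffun t => Tr m (a * t ^+ (q + 1)) * Tr m (b * t)]);
    (- h, [ffun t => Tr m (a * t ^+ (q + 1))]); (- h, [ffun t => Tr m (b * t)])])).
  by rewrite /= (gens_QQ aq aq) gens_LL gens_1 (gens_QL _ aq) (gens_Q aq) gens_L.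
by move=> t; rewrite !big_cons big_nil /= !ffunE TrD; f3_brute.
Qed.

Local Notation D := (design_code F m).
Local Notation one := [ffun=> (1 : 'F_3)].
Local Notation Qform a := [ffun t => Tr m (a * t ^+ (q + 1))].
Local Notation Lform b := [ffun t => Tr m (b * t)].
Local Notation Qtrans a c := [ffun t => Tr m (a * (t + c) ^+ (q + 1))].
Local Notation Qtrans_sq a c h := [ffun t => (Tr m (a * (t + c) ^+ (q + 1)) + h) ^+ 2].
Local Notation sqv f := [ffun t => f t ^+ 2].

Lemma Qtrans_sq_D a c h : a ^+ q = a -> a != 0 -> h != 0 -> Qtrans_sq a c h \in D.
Proof.
move=> aq a0 h0; pose w := [ffun t => Tr m (a * (t + c) ^+ (q + 1)) + h].
apply: (f3span_ext (f := incid [set t | w t != 0])) => [|t]; last first.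
  by rewrite incid_support !ffunE.
apply: mem_f3span; apply/imsetP; exists [set t | w t != 0] => //.
by apply/imsetP; exists w => //; apply: minword_translate.
Qed.

(* X = (X + 1)^2 - (X - 1)^2. *)
Lemma Qtrans_D a c : a ^+ q = a -> a != 0 -> Qtrans a c \in D.
Proof.
move=> aq a0; apply: (f3span_comb (cs := [:: (1, Qtrans_sq a c 1); (-1, Qtrans_sq a c (-1))])).
  by rewrite /= !Qtrans_sq_D.
by move=> t; rewrite !big_cons big_nil /= !ffunE; f3_brute.
Qed.

(* Q_1(t + c) + Q_1(t - c) + Q_1(t) = - Q_1(c), and Q_1 takes the value 1. *)
Lemma one_D : one \in D.
Proof.
have q1 : (1 : F) ^+ q = 1 by rewrite expr1n.
have [c0] : exists c0, c0 \in Qfibre 1 1.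
  apply/set0Pn; rewrite -card_gt0 card_Qfibre ?oner_neq0 //.
  by rewrite /Qcount /= subn0 muln_gt0 addn1 expn_gt0.
rewrite inE mul1r => /eqP Qc0.
apply: (f3span_comb (cs := [:: (-1, Qtrans 1 c0); (-1, Qtrans 1 (- c0)); (-1, Qtrans 1 0)])).
  by rewrite /= !Qtrans_D ?oner_neq0.
move=> t; rewrite !big_cons big_nil /= !ffunE !addr0 TrQ_shift // TrQ_shiftN //.
by rewrite !mul1r Qc0; f3_brute.
Qed.

(* X^2 = (X + 1)^2 + X - 1. *)
Lemma Qtrans_sqv_D a c : a ^+ q = a -> a != 0 -> sqv (Qtrans a c) \in D.
Proof.
move=> aq a0; apply: (f3span_comb (cs := [:: (1, Qtrans_sq a c 1); (1, Qtrans a c); (-1, one)])).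
  by rewrite /= Qtrans_sq_D ?Qtrans_D ?one_D.
by move=> t; rewrite !big_cons big_nil /= !ffunE; f3_brute.
Qed.

Lemma Qform_D a : a ^+ q = a -> a != 0 -> Qform a \in D.
Proof. by move=> aq a0; apply: f3span_ext (Qtrans_D 0 aq a0) _ => t; rewrite !ffunE addr0. Qed.

Lemma Qform_sqv_D a : a ^+ q = a -> sqv (Qform a) \in D.
Proof.
move=> aq; have [-> | a0] := eqVneq a 0.
  by apply: f3span_zero => t; rewrite !ffunE mul0r Tr0 expr0n.
by apply: f3span_ext (Qtrans_sqv_D 0 aq a0) _ => t; rewrite !ffunE addr0.
Qed.

(* With c = b^q: Q_1(t + c) = Q_1(t) - L_b(t) + Q_1(c). *)
Lemma Lform_D b : Lform b \in D.
Proof.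
have q1 : (1 : F) ^+ q = 1 by rewrite expr1n.
pose c := b ^+ q; have cq : c ^+ q = b by rewrite expqK.
apply: (f3span_comb (cs := [:: (-1, Qtrans 1 c); (1, Qform 1);
                              (Tr m (c ^+ (q + 1)), one)])).
  by rewrite /= Qtrans_D ?oner_neq0 // Qform_D ?oner_neq0 // one_D.
move=> t; rewrite !big_cons big_nil /= !ffunE TrQ_shift // !mul1r cq; f3_brute.
Qed.

(* L^2 = - (Q - L + K)^2 - (Q + L + K)^2 - Q^2 + K Q - K^2, where Q = Q_1,
   K = Q_1(c) and Q_1(t +- c) = Q_1(t) -+ L_b(t) + K for c = b^q. *)
Lemma Lform_sqv_D b : sqv (Lform b) \in D.
Proof.
have q1 : (1 : F) ^+ q = 1 by rewrite expr1n.
pose c := b ^+ q; have cq : c ^+ q = b by rewrite expqK.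
pose K := Tr m (c ^+ (q + 1)).
apply: (f3span_comb (cs := [:: (-1, sqv (Qtrans 1 c)); (-1, sqv (Qtrans 1 (- c)));
     (-1, sqv (Qform 1)); (K, Qform 1); (- K ^+ 2, one)])).
  by rewrite /= Qtrans_sqv_D ?oner_neq0 // Qtrans_sqv_D ?oner_neq0 // Qform_sqv_D //
    Qform_D ?oner_neq0 // one_D.
move=> t; rewrite !big_cons big_nil /= !ffunE TrQ_shift // TrQ_shiftN //.
by rewrite !mul1r cq /K; f3_brute.
Qed.

(* With a c^q = b: Q_a L_b = - (Q_a - L_b + K)^2 + (Q_a + L_b + K)^2 - K L_b. *)
Lemma QL_D a b : a ^+ q = a -> a != 0 ->
  [ffun t => Tr m (a * t ^+ (q + 1)) * Tr m (b * t)] \in D.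
Proof.
move=> aq a0; pose c := (b / a) ^+ q.
have acq : a * c ^+ q = b by rewrite expqK mulrC divfK.
pose K := Tr m (a * c ^+ (q + 1)).
apply: (f3span_comb (cs := [:: (-1, sqv (Qtrans a c)); (1, sqv (Qtrans a (- c)));
                              (- K, Lform b)])).
  by rewrite /= Qtrans_sqv_D // Qtrans_sqv_D // Lform_D.
move=> t; rewrite !big_cons big_nil /= !ffunE TrQ_shift // TrQ_shiftN //.
by rewrite acq /K; f3_brute.
Qed.

(* Polarisation: x y = - (x + y)^2 + x^2 + y^2 in F_3. *)
Lemma LL_D b b' : [ffun t => Tr m (b * t) * Tr m (b' * t)] \in D.
Proof.
apply: (f3span_comb (cs := [:: (-1, sqv (Lform (b + b'))); (1, sqv (Lform b));
                              (1, sqv (Lform b'))])).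
  by rewrite /= !Lform_sqv_D.
by move=> t; rewrite !big_cons big_nil /= !ffunE mulrDl TrD; f3_brute.
Qed.

(* Polarisation again, with Q_(a + a') = Q_a + Q_a'. *)
Lemma QQ_D a a' : a ^+ q = a -> a' ^+ q = a' ->
  [ffun t => Tr m (a * t ^+ (q + 1)) * Tr m (a' * t ^+ (q + 1))] \in D.
Proof.
move=> aq a'q; have aa'q : (a + a') ^+ q = a + a' by rewrite frobD aq a'q.
apply: (f3span_comb (cs := [:: (-1, sqv (Qform (a + a'))); (1, sqv (Qform a));
                              (1, sqv (Qform a'))])).
  by rewrite /= !Qform_sqv_D.
by move=> t; rewrite !big_cons big_nil /= !ffunE mulrDl TrD; f3_brute.
Qed.

Lemma gens_in_D : {subset gens F m <= D}.
Proof.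
move=> f; rewrite inE => /orP [/orP [/orP [/orP [/orP [fLL | fL] | fQL] | fQQ] | fQ] | /eqP ->].
- by case/existsP: fLL => b /existsP [b' /eqP ->]; apply: LL_D.
- by case/existsP: fL => b /eqP ->; apply: Lform_D.
- by case/existsP: fQL => a /existsP [b /and3P [/eqP aq a0 /eqP ->]]; apply: QL_D.
- case/existsP: fQQ => a /existsP [a' /and5P [/eqP aq _ /eqP a'q _ /eqP ->]].
  exact: QQ_D.
- by case/existsP: fQ => a /and3P [/eqP aq a0 /eqP ->]; apply: Qform_D.
- exact: one_D.
Qed.

End Code.

Unset Implicit Arguments.
Set Strict Implicit.

Theorem lemma3p10 (F : finFieldType) (m : nat) :
  (2 <= m)%N -> 3%N \in [pchar F] -> #|F| = (3 ^ (2 * m))%N ->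
  design_code F m = f3span (gens F m).
Proof.
move=> m2 char3 cardF; apply: f3span_eq; first exact: blocks_in_gens.
exact: gens_in_D char3 cardF (ltnW m2).
Qed.
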